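(* Strong p-reflexivity fails in general: there exist a language $L$, an $L$-algebra $\mathfrak A$ with universe $A$, and elements $a,b,d\in A$ with $d\neq b$ such that $a:b\approx_{\mathfrak A}a:d$.
   Context: Let $L$ be a language of algebras: a set of function symbols, each with an arity in $\mathbb N$ (constants are 0-ary function symbols); $L$ may be empty. Fix a countably infinite set $X$ of variables; $T_{L,X}$ is the set of $L$-terms over $X$, and $X(s)$ denotes the set of variables occurring in a term $s$. For an $L$-algebra $\mathfrak A$ with universe $A$, every term $s$ induces a function $s^{\mathfrak A}$, evaluated at assignments of elements of $A$ to variables. An arrow of $\mathfrak A$ is a pair $(a,b)\in A\times A$, written $a\to b$. The generalizations of an arrow $a\to b$ in $\mathfrak A$ are the pairs of arbitrary terms $s\to t$ with $s,t\in T_{L,X}$ such that there is an assignment $\sigma$ of elements of $A$ to the variables in $X(s)\cup X(t)$ with $s^{\mathfrak A}(\sigma)=a$ and $t^{\mathfrak A}(\sigma)=b$; their set is denoted $\uparrow_{\mathfrak A}(a\to b)$. For $L$-algebras $\mathfrak A,\mathfrak B$, an arrow $a\to b$ of $\mathfrak A$ and an arrow $c\to d$ of $\mathfrak B$, set $(a\to b)\uparrow_{(\mathfrak A,\mathfrak B)}(c\to d):=\uparrow_{\mathfrak A}(a\to b)\cap\uparrow_{\mathfrak B}(c\to d)$. A pair of terms $s\to t$ is trivial in $(\mathfrak A,\mathfrak B)$ if it belongs to $\uparrow_{\mathfrak A}(e)$ for every arrow $e$ of $\mathfrak A$ and to $\uparrow_{\mathfrak B}(e')$ for every arrow $e'$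 of $\mathfrak B$. We write $a\to b\lesssim_{(\mathfrak A,\mathfrak B)}c\to d$ iff either (i) every element of $\uparrow_{\mathfrak A}(a\to b)\cup\uparrow_{\mathfrak B}(c\to d)$ is trivial in $(\mathfrak A,\mathfrak B)$, or (ii) $(a\to b)\uparrow_{(\mathfrak A,\mathfrak B)}(c\to d)$ contains an element not trivial in $(\mathfrak A,\mathfrak B)$ and, for every arrow $c'\to d'$ of $\mathfrak B$, the inclusion $(a\to b)\uparrow_{(\mathfrak A,\mathfrak B)}(c\to d)\subseteq(a\to b)\uparrow_{(\mathfrak A,\mathfrak B)}(c'\to d')$ implies equality of these two sets. Define $a\to b\approx_{(\mathfrak A,\mathfrak B)}c\to d$ iff $a\to b\lesssim_{(\mathfrak A,\mathfrak B)}c\to d$ and $c\to d\lesssim_{(\mathfrak B,\mathfrak A)}a\to b$. For $a,b\in A$ and $c,d\in B$, the similarity-based analogical proportion $a:b\approx_{(\mathfrak A,\mathfrak B)}c:d$ holds iff $a\to b\approx_{(\mathfrak A,\mathfrak B)}c\to d$ and $b\to a\approx_{(\mathfrak A,\mathfrak B)}d\to c$. We write $\approx_{\mathfrak A}$ for $\approx_{(\mathfrak A,\mathfrak A)}$. *)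

From mathcomp Require Import ssreflect ssrfun ssrbool eqtype ssrnat fintype.

Set Implicit Arguments.
Unset Strict Implicit.
Unset Printing Implicit Defensive.

(* A language L: a type F of function symbols with arities ar : F -> nat
   (constants have arity 0; F may be empty). *)

Inductive term (F : Type) (ar : F -> nat) : Type :=
| Var : nat -> term ar
| App : forall f : F, ('I_(ar f) -> term ar) -> term ar.

Arguments Var {F ar} _.
Arguments App {F ar} f _.

Record algebra (F : Type) (ar : F -> nat) := Algebra {
  carrier :> Type;
  op : forall f : F, ('I_(ar f) -> carrier) -> carrier
}.

Arguments op {F ar} _ f _.

Fixpoint eval (F : Type) (ar : F -> nat) (A : algebra ar) (sigma : nat -> A)
  (s : term ar) : A :=
  match s with
  | Var x => sigma x
  | App f args => op A f (fun i => eval sigma (args i))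
  end.

Definition tpair (F : Type) (ar : F -> nat) := (term ar * term ar)%type.

Definition gen (F : Type) (ar : F -> nat) (A : algebra ar) (a b : A)
  (p : tpair ar) : Prop :=
  exists sigma : nat -> A, eval sigma p.1 = a /\ eval sigma p.2 = b.

Definition gen2 (F : Type) (ar : F -> nat) (A B : algebra ar)
  (a b : A) (c d : B) (p : tpair ar) : Prop :=
  gen a b p /\ gen c d p.

Definition trivial_in (F : Type) (ar : F -> nat) (A B : algebra ar)
  (p : tpair ar) : Prop :=
  (forall a b : A, gen a b p) /\ (forall c d : B, gen c d p).

Definition lesssim (F : Type) (ar : F -> nat) (A B : algebra ar)
  (a b : A) (c d : B) : Prop :=
  (forall p, (gen a b p \/ gen c d p) -> trivial_in A B p)
  \/
  ((exists p, gen2 a b c d p /\ ~ trivial_in A B p) /\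
   forall c' d' : B,
     (forall p, gen2 a b c d p -> gen2 a b c' d' p) ->
     (forall p, gen2 a b c d p <-> gen2 a b c' d' p)).

Definition arrow_approx (F : Type) (ar : F -> nat) (A B : algebra ar)
  (a b : A) (c d : B) : Prop :=
  lesssim a b c d /\ lesssim c d a b.

Definition analogy (F : Type) (ar : F -> nat) (A B : algebra ar)
  (a b : A) (c d : B) : Prop :=
  arrow_approx a b c d /\ arrow_approx b a d c.

From mathcomp Require Import ssreflect ssrfun ssrbool eqtype ssrnat fintype.

Set Implicit Arguments.
Unset Strict Implicit.
Unset Printing Implicit Defensive.

(* In the empty language every term is a variable, so a generalization of an
   arrow a -> b with a <> b is a pair of distinct variables; such a pair
   generalizes every arrow of every algebra and is therefore trivial. Hence in
   any set with three elements 0, 1, 2 all the arrows 0 -> 1, 0 -> 2, 1 -> 0,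
   2 -> 0 satisfy clause (i) of the definition of <~, which gives
   0 : 1 ~ 0 : 2 although 2 <> 1. *)

Definition empty_arity (f : Empty_set) : nat := match f with end.

Definition set_algebra (T : Type) : algebra empty_arity :=
  @Algebra Empty_set empty_arity T (fun f => match f with end).

Lemma gen_distinct_vars (F : Type) (ar : F -> nat) (A : algebra ar)
    (a b : A) (x y : nat) :
  x <> y -> gen a b (Var x, Var y).
Proof.
move=> neq_xy; exists (fun z => if z == x then a else b) => /=.
by rewrite eqxx; split=> //; case: eqP => // eq_yx; case: neq_xy.
Qed.

Lemma trivial_distinct_vars (F : Type) (ar : F -> nat) (A B : algebra ar)
    (x y : nat) :
  x <> y -> trivial_in A B (Var x, Var y).
Proof. by move=> neq_xy; split=> *; apply: gen_distinct_vars. Qed.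

Lemma gen_set_algebra_neq (T : Type) (a b : set_algebra T) (p : tpair _) :
  a <> b -> gen a b p -> exists x y, x <> y /\ p = (Var x, Var y).
Proof.
move=> neq_ab [sigma []]; case: p => [[x|[]] [y|[]]] /= eval_x eval_y.
exists x, y; split=> // eq_xy; apply: neq_ab.
by rewrite -eval_x -eval_y eq_xy.
Qed.

Lemma trivial_of_gen_neq (T : Type) (a b : set_algebra T) (p : tpair _) :
  a <> b -> gen a b p -> trivial_in (set_algebra T) (set_algebra T) p.
Proof.
move=> neq_ab /(gen_set_algebra_neq neq_ab) [x [y [neq_xy ->]]].
exact: trivial_distinct_vars.
Qed.

Lemma lesssim_set_algebra_neq (T : Type) (a b c d : set_algebra T) :
  a <> b -> c <> d -> lesssim a b c d.
Proof.
move=> neq_ab neq_cd; left=> p [gen_ab | gen_cd].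
- exact: trivial_of_gen_neq gen_ab.
- exact: trivial_of_gen_neq gen_cd.
Qed.

Theorem theorem3 :
  exists (F : Type) (ar : F -> nat) (A : algebra ar) (a b d : A),
    d <> b /\ analogy (A := A) (B := A) a b a d.
Proof.
exists Empty_set, empty_arity, (set_algebra nat), 0, 1, 2.
by split=> //; split; split; apply: lesssim_set_algebra_neq.
Qed.
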